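(* Let $\{e_k:k\in\mathbb N\}$ be an orthonormal basis of $X$, and for every $k\in\mathbb N$ let $\mu_k$ be a real valued Borel measure on $X$ such that, setting $M_n(B):=\sum_{k=1}^n\mu_k(B)e_k$ for $n\in\mathbb N$ and Borel $B\subset X$, we have $\sup_{n\in\mathbb N}|M_n|(X)=:C<+\infty$. Then there exists $M\in\mathcal M(X,X)$ with $|M|(X)\le C$ and $\langle M(B),e_k\rangle=\mu_k(B)$ for all $k\in\mathbb N$ and Borel $B$; in particular $M(B)=\sum_{k=1}^\infty\mu_k(B)e_k$ for every Borel set $B$.
   Context: $X$ is a separable real Hilbert space. $\mathcal M(X,X)$ is the space of countably additive $X$-valued Borel measures $m$ on $X$ with finite total variation, where for an $X$-valued Borel measure $m$, $|m|(B):=\sup\sum_n\|m(B_n)\|$, the supremum over all at most countable partitions of $B$ into pairwise disjoint Borel sets. *)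

From HB Require Import structures.
From mathcomp Require Import all_boot all_order all_algebra.
From mathcomp Require Import all_classical all_reals all_analysis.
Set Implicit Arguments. Unset Strict Implicit. Unset Printing Implicit Defensive.
Import Order.TTheory GRing.Theory Num.Theory.
Import numFieldNormedType.Exports.
Local Open Scope classical_set_scope.
Local Open Scope ring_scope.

(* A real Hilbert space: a complete real normed space whose norm comes from
   an inner product [ip] (symmetric, bilinear, <x,x> = ||x||^2). *)
Definition is_inner_product (R : realType) (X : completeNormedModType R)
  (ip : X -> X -> R) : Prop :=
  [/\ (forall x y, ip x y = ip y x),
      (forall a x y z, ip (a *: x + y) z = a * ip x z + ip y z) &
      (forall x, ip x x = `|x| ^+ 2)].

Definition orthonormal_basis (R : realType) (X : completeNormedModType R)
  (ip : X -> X -> R) (e : nat -> X) : Prop :=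
  (forall i j, ip (e i) (e j) = (i == j)%:R) /\
  closure [set x | exists n (c : nat -> R), x = \sum_(k < n) c k *: e k]
    = [set: X].

Definition Borel (T : topologicalType) : set (set T) := <<s [set U | open U] >>.

(* countable Borel partitions of B (finite partitions = padding with set0) *)
Definition borel_partition (T : topologicalType) (B : set T) (F : nat -> set T)
  : Prop :=
  [/\ (forall n, Borel (F n)), trivIset setT F & \bigcup_n F n = B].

Definition real_measure (R : realType) (T : topologicalType) (mu : set T -> R)
  : Prop :=
  mu set0 = 0 /\
  forall F : nat -> set T, (forall n, Borel (F n)) -> trivIset setT F ->
    (fun n => \sum_(k < n) mu (F k)) @ \oo --> mu (\bigcup_k F k).

Definition vector_measure (R : realType) (T : topologicalType)
  (V : normedModType R) (m : set T -> V) : Prop :=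
  m set0 = 0 /\
  forall F : nat -> set T, (forall n, Borel (F n)) -> trivIset setT F ->
    (fun n => \sum_(k < n) m (F k)) @ \oo --> m (\bigcup_k F k).

Definition vtotal_variation (R : realType) (T : topologicalType)
  (V : normedModType R) (m : set T -> V) (B : set T) : \bar R :=
  ereal_sup [set x | exists F, borel_partition B F /\
                     x = (\sum_(0 <= n <oo) (`|m (F n)|)%:E)%E].

Definition partial_vmeasure (R : realType) (T : topologicalType)
  (V : normedModType R) (mu : nat -> set T -> R) (e : nat -> V) (n : nat)
  : set T -> V :=
  fun B => \sum_(k < n) mu k B *: e k.

(* The partial sums M_n(B) = sum_(k < n) mu_k(B) e_k satisfy
   ||M_n(B)||^2 = sum_(k < n) mu_k(B)^2 <= C^2, so by completeness of X they
   converge to some M(B), whose coefficients are <M(B), e_k> = mu_k(B).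
   Finite sums sum_j ||M(B_j)|| over disjoint Borel sets are limits of the
   corresponding sums for M_n, hence bounded by C; this bounds |M|(X) by C
   and makes sum_j M(B_j) absolutely convergent. Its limit has the same
   coefficients mu_k(U_j B_j) as M(U_j B_j), so the two agree because the
   e_k form a basis: M is countably additive. *)

From HB Require Import structures.
From mathcomp Require Import all_boot all_order all_algebra.
From mathcomp Require Import all_classical all_reals all_analysis.
From mathcomp Require Import lra.
Import Order.TTheory GRing.Theory Num.Theory.
Import numFieldNormedType.Exports.
Local Open Scope classical_set_scope.
Local Open Scope ring_scope.

Section InnerProduct.
Context {R : realType} {X : completeNormedModType R} {ip : X -> X -> R}.
Hypothesis ipP : is_inner_product ip.

Lemma ipC x y : ip x y = ip y x. Proof. by case: ipP. Qed.

Lemma ipxx x : ip x x = `|x| ^+ 2. Proof. by case: ipP. Qed.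

Lemma ipDl x y z : ip (x + y) z = ip x z + ip y z.
Proof. by case: ipP => _ lin _; have := lin 1 x y z; rewrite scale1r mul1r. Qed.

Lemma ip0l z : ip 0 z = 0.
Proof. by have := ipDl 0 0 z; rewrite addr0; lra. Qed.

Lemma ipZl a x z : ip (a *: x) z = a * ip x z.
Proof. by case: ipP => _ lin _; rewrite -[a *: x]addr0 lin ip0l addr0. Qed.

Lemma ipBl x y z : ip (x - y) z = ip x z - ip y z.
Proof. by rewrite ipDl -scaleN1r ipZl mulN1r. Qed.

Lemma ip_suml I (s : seq I) (f : I -> X) z :
  ip (\sum_(i <- s) f i) z = \sum_(i <- s) ip (f i) z.
Proof. exact: (big_morph (ip^~ z) (fun x y => ipDl x y z) (ip0l z)). Qed.

Lemma ipZr a x z : ip z (a *: x) = a * ip z x.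
Proof. by rewrite ipC ipZl ipC. Qed.

Lemma ip_sumr I (s : seq I) (f : I -> X) z :
  ip z (\sum_(i <- s) f i) = \sum_(i <- s) ip z (f i).
Proof. by rewrite ipC ip_suml; apply: eq_bigr => i _; rewrite ipC. Qed.

Lemma ip_polarization x y : ip x y = (`|x + y| ^+ 2 - `|x - y| ^+ 2) / 4.
Proof.
rewrite -!ipxx !ipBl !ipDl ![ip _ (_ - _)]ipC ![ip _ (_ + _)]ipC !ipBl !ipDl.
rewrite (ipC y x); lra.
Qed.

Lemma continuous_ipr x : continuous (ip x).
Proof.
have -> : ip x = fun y => (`|x + y| ^+ 2 - `|x - y| ^+ 2) / 4.
  by apply/funext => y; exact: ip_polarization.
move=> y; apply: cvgM; last exact: cvg_cst.
apply: cvgB; rewrite expr2; apply: cvgM; apply: cvg_norm;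
  by [exact: cvgD (cvg_cst _) cvg_id | exact: cvgB (cvg_cst _) cvg_id].
Qed.

Lemma continuous_ipl z : continuous (ip^~ z).
Proof.
have -> : ip^~ z = ip z by apply/funext => x; rewrite ipC.
exact: continuous_ipr.
Qed.

End InnerProduct.

Section OrthonormalBasis.
Context {R : realType} {X : completeNormedModType R} {ip : X -> X -> R}
  {e : nat -> X}.
Hypotheses (ipP : is_inner_product ip) (eP : orthonormal_basis ip e).

Lemma ip_basis i j : ip (e i) (e j) = (i == j)%:R.
Proof. by case: eP. Qed.

Lemma ip_sum_basis (s : seq nat) (c : nat -> R) j : uniq s -> j \in s ->
  ip (\sum_(k <- s) c k *: e k) (e j) = c j.
Proof.
move=> s_uniq sj; rewrite (ip_suml ipP) (bigD1_seq j) //= (ipZl ipP).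
rewrite ip_basis eqxx mulr1 big1 ?addr0 // => k /negPf kj.
by rewrite (ipZl ipP) ip_basis kj mulr0.
Qed.

Lemma norm_sum_basis (s : seq nat) (c : nat -> R) : uniq s ->
  `|\sum_(k <- s) c k *: e k| ^+ 2 = \sum_(k <- s) c k ^+ 2.
Proof.
move=> s_uniq; rewrite -(ipxx ipP) (ip_sumr ipP); apply: eq_big_seq => j sj.
by rewrite (ipZr ipP) ip_sum_basis // expr2.
Qed.

Lemma cvg_sum_basis (c : nat -> R) K :
  (forall n, \sum_(k < n) c k ^+ 2 <= K) ->
  cvgn (fun n => \sum_(k < n) c k *: e k).
Proof.
move=> c2_bounded.
have -> : (fun n => \sum_(k < n) c k *: e k) = series (fun k => c k *: e k).
  by rewrite seriesEord.
apply/cauchy_cvgP/cauchy_seriesP => eps eps_gt0.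
have : cvgn (series (fun k => c k ^+ 2)).
  apply: nondecreasing_is_cvgn.
    by apply: nondecreasing_series => k _ _; exact: sqr_ge0.
  by exists K => _ [n _ <-]; rewrite seriesEord /=; exact: c2_bounded.
move=> /cauchy_cvgP/cauchy_seriesP /(_ (eps ^+ 2) (exprn_gt0 _ eps_gt0)).
apply: filterS => -[m n] /= small.
rewrite -(@ltr_pXn2r _ 2) ?nnegrE ?normr_ge0 ?ltW //.
rewrite norm_sum_basis ?iota_uniq //.
exact: le_lt_trans (ler_norm _) small.
Qed.

Lemma basis_coef_inj x y : (forall k, ip x (e k) = ip y (e k)) -> x = y.
Proof.
move=> same_coef; apply/eqP.
rewrite -subr_eq0 -normr_eq0 -sqrf_eq0 -(ipxx ipP).
set v := x - y.
have span_orth : [set z | exists n (c : nat -> R), z = \sum_(k < n) c k *: e k]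
    `<=` ip v @^-1` [set 0].
  move=> _ [n [c ->]] /=; rewrite (ip_sumr ipP) big1 // => k _.
  by rewrite (ipZr ipP) (ipBl ipP) same_coef subrr mulr0.
have orth_closed : closed (ip v @^-1` [set 0]).
  apply: preimage_closed => [z _|]; [exact: continuous_ipr | exact: closed_eq].
move: (closureS span_orth).
rewrite (proj2 eP) -((closure_id _).1 orth_closed).
by move=> /(_ v I) /= ->.
Qed.

End OrthonormalBasis.

Section TotalVariation.
Context {R : realType} {T : topologicalType} {V : normedModType R}
  (m : set T -> V).

Lemma sum_norm_le_vtotal_variation (F : nat -> set T) J :
  (forall n, Borel (F n)) -> trivIset setT F ->
  (\sum_(j < J) (`|m (F j)|)%:E <= vtotal_variation m [set: T])%E.
Proof.
move=> F_Borel F_disj.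
pose G j := if j is j'.+1 then F j' else ~` \bigcup_i F i.
have G_partition : borel_partition [set: T] G.
  split.
  - case=> [|j] //=; rewrite -setTD.
    by apply: sigma_algebraCD; apply: sigma_algebra_bigcup.
  - move=> [|i] [|j] _ _ [x [/= Gix Gjx]] //.
    + by case: Gix; exists j.
    + by case: Gjx; exists i.
    + by congr S; apply: F_disj => //; exists x.
  - apply/seteqP; split=> // x _.
    have [[j _ Fjx]|nFx] := pselect ((\bigcup_j F j) x); first by exists j.+1.
    by exists 0%N.
apply: le_trans (ereal_sup_ubound _); last by exists G.
apply: le_trans (nneseries_lim_ge J.+1 _) => [|j _ _]; last first.
  by rewrite lee_fin.
by rewrite big_nat_recl //= big_mkord leeDr // lee_fin.
Qed.

Lemma vtotal_variation_le (c : R) (B : set T) :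
  (forall (F : nat -> set T) J, (forall n, Borel (F n)) -> trivIset setT F ->
    \sum_(j < J) `|m (F j)| <= c) ->
  (vtotal_variation m B <= c%:E)%E.
Proof.
move=> disj_sum_le; apply: ge_ereal_sup => _ [F [[F_Borel F_disj _] ->]].
apply: lime_le; first by apply: is_cvg_nneseries => n _ _; rewrite lee_fin.
by apply: nearW => J; rewrite sumEFin lee_fin big_mkord; exact: disj_sum_le.
Qed.

End TotalVariation.

Definition lim_vmeasure {R : realType} {T : topologicalType}
  {V : normedModType R} (mu : nat -> set T -> R) (e : nat -> V) : set T -> V :=
  fun B => lim (partial_vmeasure mu e n B @[n --> \oo]).

Section LimitMeasure.
Context {R : realType} {X : completeNormedModType R} {ip : X -> X -> R}
  {e : nat -> X} {mu : nat -> set X -> R} {C : R}.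
Hypotheses (ipP : is_inner_product ip) (eP : orthonormal_basis ip e).
Hypothesis muP : forall k, real_measure (mu k).
Hypothesis partial_tv_le :
  forall n, (vtotal_variation (partial_vmeasure mu e n) [set: X] <= C%:E)%E.

Let M := lim_vmeasure mu e.

Lemma partial_disjoint_sum_le (F : nat -> set X) J n :
  (forall j, Borel (F j)) -> trivIset setT F ->
  \sum_(j < J) `|partial_vmeasure mu e n (F j)| <= C.
Proof.
move=> F_Borel F_disj; rewrite -lee_fin -sumEFin.
apply: le_trans (partial_tv_le n).
by apply: sum_norm_le_vtotal_variation.
Qed.

Lemma partial_norm_le n B : Borel B -> `|partial_vmeasure mu e n B| <= C.
Proof.
move=> B_Borel; pose F j := if j is 0 then B else set0.
have := @partial_disjoint_sum_le F 1 n; rewrite big_ord1; apply.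
- by case=> [|j] //=; exact: sigma_algebra0.
- by move=> [|i] [|j] _ _ [x [/= Fix Fjx]].
Qed.

Lemma cvg_partial_vmeasure B : Borel B ->
  partial_vmeasure mu e n B @[n --> \oo] --> M B.
Proof.
move=> B_Borel; apply: (cvg_sum_basis ipP eP (mu^~ B) (C ^+ 2)) => n.
have := norm_sum_basis ipP eP (index_iota 0 n) (mu^~ B) (iota_uniq 0 (n - 0)).
rewrite !big_mkord => <-.
have := partial_norm_le n B B_Borel.
have := normr_ge0 (partial_vmeasure mu e n B).
rewrite /partial_vmeasure; nra.
Qed.

Lemma lim_vmeasure_coef k B : Borel B -> ip (M B) (e k) = mu k B.
Proof.
move=> B_Borel.
have coef_cvg :
    ip (partial_vmeasure mu e n B) (e k) @[n --> \oo] --> ip (M B) (e k).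
  apply: continuous_cvg (continuous_ipl ipP (e k) _) _.
  exact: cvg_partial_vmeasure.
have coef_ultimately :
    \forall n \near \oo, ip (partial_vmeasure mu e n B) (e k) = mu k B.
  apply: filterS (nbhs_infty_gt k) => n kn.
  have := ip_sum_basis ipP eP (index_iota 0 n) (mu^~ B) k
    (iota_uniq 0 (n - 0)).
  by rewrite big_mkord mem_iota subn0 kn => ->.
exact: cvg_unique _ coef_cvg (cvg_near_cst _ coef_ultimately).
Qed.

Lemma lim_vmeasure_disjoint_sum_le (F : nat -> set X) J :
  (forall j, Borel (F j)) -> trivIset setT F -> \sum_(j < J) `|M (F j)| <= C.
Proof.
move=> F_Borel F_disj.
have sum_cvg : \sum_(j < J) `|partial_vmeasure mu e n (F j)| @[n --> \oo] -->
    \sum_(j < J) `|M (F j)|.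
  apply: cvg_big => [|j _]; first exact: add_continuous.
  exact: cvg_norm (cvg_partial_vmeasure (F j) (F_Borel j)).
apply: cvgr_to_le sum_cvg _; apply: nearW => n.
exact: partial_disjoint_sum_le.
Qed.

Lemma lim_vmeasure_tv_le : (vtotal_variation M [set: X] <= C%:E)%E.
Proof.
by apply: vtotal_variation_le => F J; exact: lim_vmeasure_disjoint_sum_le.
Qed.

Lemma lim_vmeasure0 : M set0 = 0.
Proof.
rewrite /M /lim_vmeasure.
have -> : partial_vmeasure mu e ^~ set0 = fun=> 0.
  by apply/funext => n; apply: big1 => k _; rewrite (proj1 (muP k)) scale0r.
exact: lim_cst.
Qed.

Lemma lim_vmeasure_sigma_additive (F : nat -> set X) :
  (forall j, Borel (F j)) -> trivIset setT F ->
  (fun n => \sum_(k < n) M (F k)) @ \oo --> M (\bigcup_k F k).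
Proof.
move=> F_Borel F_disj.
have -> : (fun n => \sum_(k < n) M (F k)) = series (M \o F).
  by rewrite seriesEord.
have series_cvg : cvgn (series (M \o F)).
  apply: normed_cvg; apply: nondecreasing_is_cvgn.
    by apply: nondecreasing_series => k _ _; rewrite normr_ge0.
  exists C => _ [n _ <-]; rewrite /normed_series_of seriesEord /=.
  exact: lim_vmeasure_disjoint_sum_le.
suff -> : M (\bigcup_k F k) = limn (series (M \o F)) by [].
apply: (basis_coef_inj ipP eP) => k.
rewrite lim_vmeasure_coef; last exact: sigma_algebra_bigcup.
have coef_cvg : ip (series (M \o F) n) (e k) @[n --> \oo] -->
    ip (limn (series (M \o F))) (e k).
  exact: continuous_cvg (continuous_ipl ipP (e k) _) series_cvg.
have coef_series : (fun n => ip (series (M \o F) n) (e k)) =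
    (fun n => \sum_(j < n) mu k (F j)).
  apply/funext => n; rewrite seriesEord /= (ip_suml ipP).
  by apply: eq_bigr => j _; exact: lim_vmeasure_coef.
rewrite coef_series in coef_cvg.
exact: cvg_unique _ (proj2 (muP k) F F_Borel F_disj) coef_cvg.
Qed.

Lemma lim_vmeasure_vector_measure : vector_measure M.
Proof.
by split; [exact: lim_vmeasure0 | exact: lim_vmeasure_sigma_additive].
Qed.

End LimitMeasure.

Theorem lemma2p8 (R : realType) (X : completeNormedModType R)
  (ip : X -> X -> R) (e : nat -> X) (mu : nat -> set X -> R) (C : R) :
  is_inner_product ip ->
  orthonormal_basis ip e ->
  (forall k, real_measure (mu k)) ->
  ereal_sup [set vtotal_variation (partial_vmeasure mu e n) [set: X] | n in [set: nat]]
    = C%:E ->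
  exists M : set X -> X,
    [/\ vector_measure M,
        (vtotal_variation M [set: X] <= C%:E)%E,
        (forall k B, Borel B -> ip (M B) (e k) = mu k B) &
        (forall B, Borel B ->
           (fun n => \sum_(k < n) mu k B *: e k) @ \oo --> M B)].
Proof.
move=> ipP eP muP sup_C.
have partial_tv_le n :
    (vtotal_variation (partial_vmeasure mu e n) [set: X] <= C%:E)%E.
  by rewrite -sup_C; apply: ereal_sup_ubound; exists n.
exists (lim_vmeasure mu e); split.
- exact: lim_vmeasure_vector_measure ipP eP muP partial_tv_le.
- exact: lim_vmeasure_tv_le ipP eP partial_tv_le.
- exact: lim_vmeasure_coef ipP eP partial_tv_le.
- exact: cvg_partial_vmeasure ipP eP partial_tv_le.
Qed.
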